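(* Let $G=(V,E)$ be a connected, unweighted graph with $n$ vertices. Let $e$ be a cut edge of $G$, and let $S$ and $T$ (with $S\cup T=V$) be the vertex sets of the two connected components of $G\setminus\{e\}$. Then $$ B_e^{2}=\frac{|S||T|}{n}=\Theta(S)^{-1}. $$
   Context: A cut edge of a connected graph $G$ is an edge $e$ such that $G\setminus\{e\}$ is disconnected. For an unweighted graph, $L=D-A$ is the graph Laplacian, $L^{+}$ its Moore–Penrose pseudoinverse, $L^{2+}=(L^+)^2$, and $1_v$ the indicator vector of vertex $v$. The biharmonic distance is $B_{st}=\sqrt{(1_s-1_t)^{T}L^{2+}(1_s-1_t)}$ and $B_e:=B_{st}$ for $e=\{s,t\}$. For a nonempty proper subset $S\subset V$, $E(S,V\setminus S)$ is the set of edges with one endpoint in $S$ and one in $V\setminus S$, and the isoperimetric ratio is $\Theta(S)=\frac{n|E(S,V\setminus S)|}{|S||V\setminus S|}$. *)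

From mathcomp Require Import all_boot all_order all_algebra.
Set Implicit Arguments. Unset Strict Implicit. Unset Printing Implicit Defensive.
Import Order.TTheory GRing.Theory Num.Theory.
Local Open Scope ring_scope.

Definition simple_graph n (adj : rel 'I_n) :=
  symmetric adj /\ irreflexive adj.

Definition connected_graph n (adj : rel 'I_n) :=
  forall x y : 'I_n, connect adj x y.

Definition del_edge n (adj : rel 'I_n) (s t : 'I_n) : rel 'I_n :=
  fun x y => adj x y && ~~ (((x == s) && (y == t)) || ((x == t) && (y == s))).

Definition cut_edge n (adj : rel 'I_n) (s t : 'I_n) :=
  adj s t /\ ~ connected_graph (del_edge adj s t).

Definition component n (adj : rel 'I_n) (v : 'I_n) : {set 'I_n} :=
  [set x | connect adj v x].

Definition adjmx (R : pzRingType) n (adj : rel 'I_n) : 'M[R]_n :=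
  \matrix_(i, j) (adj i j)%:R.
Definition degmx (R : pzRingType) n (adj : rel 'I_n) : 'M[R]_n :=
  \matrix_(i, j) ((i == j)%:R * (#|[set k | adj i k]|)%:R).
Definition laplacian (R : pzRingType) n (adj : rel 'I_n) : 'M[R]_n :=
  degmx R adj - adjmx R adj.

(* X is the Moore--Penrose pseudoinverse of the real matrix A
   (the four Penrose conditions; for real matrices A^* = A^T). *)
Definition moore_penrose (R : pzRingType) n (A X : 'M[R]_n) :=
  [/\ A *m X *m A = A, X *m A *m X = X,
      (A *m X)^T = A *m X & (X *m A)^T = X *m A].

Definition indic (R : pzRingType) n (v : 'I_n) : 'cV[R]_n :=
  \col_i (i == v)%:R.

(* Biharmonic distance B_st = sqrt((1_s-1_t)^T (L^+)^2 (1_s-1_t)),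
   given Lp = L^+. *)
Definition biharmonic (R : rcfType) n (Lp : 'M[R]_n) (s t : 'I_n) : R :=
  Num.sqrt ((((indic R s - indic R t)^T *m (Lp *m Lp)) *m
             (indic R s - indic R t)) 0 0).

(* |E(S, V\S)|: each undirected edge counted once (ordered pairs with
   first endpoint in S and second outside S). *)
Definition cut_size n (adj : rel 'I_n) (S : {set 'I_n}) : nat :=
  #|[set p : 'I_n * 'I_n | [&& adj p.1 p.2, p.1 \in S & p.2 \notin S]]|.

Definition iso_ratio (R : fieldType) n (adj : rel 'I_n) (S : {set 'I_n}) : R :=
  (n%:R * (cut_size adj S)%:R) / ((#|S|)%:R * (#|~: S|)%:R).

From mathcomp Require Import all_boot all_order all_algebra ring.
Set Implicit Arguments. Unset Strict Implicit. Unset Printing Implicit Defensive.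
Import Order.TTheory GRing.Theory Num.Theory.
Local Open Scope ring_scope.

(* Let S be the side of s. Since st is the only edge leaving S, the potential
   x = 1_S - (|S|/n) 1 satisfies L x = 1_s - 1_t, and its entries sum to 0.
   On a connected graph ker L is the constants; L^+ is symmetric and kills
   them, so L^+ (1_s - 1_t) = x and
   B_st^2 = |x|^2 = |S| (1 - |S|/n)^2 + |T| (|S|/n)^2 = |S| |T| / n.
   The isoperimetric part is |E(S, T)| = 1. *)

Section CutEdge.
Variables (n : nat) (adj : rel 'I_n) (s t : 'I_n).
Hypothesis adj_sym : symmetric adj.
Local Notation G' := (del_edge adj s t).

Lemma del_edge_sym : symmetric G'.
Proof.
move=> x y; rewrite /del_edge adj_sym [(y == s) && _]andbC [(y == t) && _]andbC.
by rewrite orbC.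
Qed.

Lemma adj_del_edge x y :
  adj x y -> G' x y \/ ((x == s) && (y == t) || (x == t) && (y == s)).
Proof. by rewrite /del_edge => ->; case: (_ || _); [right | left]. Qed.

Hypotheses (adj_conn : connected_graph adj) (st_cut : cut_edge adj s t).

Lemma cut_edge_disconnects : ~~ connect G' s t.
Proof.
apply/negP => cst; case: st_cut => _; apply => x y.
apply: connect_sub (adj_conn x y) => u v /adj_del_edge [/connect1 // | uv].
case/orP: uv => /andP [/eqP -> /eqP ->] //.
by rewrite (sym_connect_sym del_edge_sym).
Qed.

Lemma connect_cut_edge x : connect G' s x || connect G' t x.
Proof.
have cl : closed adj [pred y | connect G' s y || connect G' t y].
  apply: intro_closed; first exact: sym_connect_sym.
  move=> u v /adj_del_edge [uv | /orP [] /andP [_ /eqP ->]]; last first.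
  - by rewrite !inE connect0.
  - by rewrite !inE connect0 orbT.
  by case/orP => cu; rewrite !inE (connect_trans cu (connect1 uv)) ?orbT.
by have := closed_connect cl (adj_conn s x); rewrite !inE connect0 => <-.
Qed.

Local Notation S := (component G' s).

Lemma component_cut_edgeC : component G' t = ~: S.
Proof.
apply/setP => x; rewrite !inE; have := connect_cut_edge x.
case csx: (connect G' s x) => //= _; apply/negP => ctx.
move: cut_edge_disconnects.
by rewrite (connect_trans csx) // (sym_connect_sym del_edge_sym).
Qed.

Lemma mem_component_cut_edge : s \in S /\ t \notin S.
Proof. by rewrite !inE connect0 cut_edge_disconnects. Qed.

Lemma cut_edge_boundary i j :
  adj i j -> i \in S -> j \notin S -> (i, j) = (s, t).
Proof.
rewrite !inE => /adj_del_edge [ij | ij] csi.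
  by rewrite (connect_trans csi (connect1 ij)).
by case/orP: ij => /andP [/eqP -> /eqP ->]; rewrite ?connect0.
Qed.

Lemma cut_size_cut_edge : cut_size adj S = 1%N.
Proof.
rewrite /cut_size -(cards1 (s, t)); congr #|pred_of_set _|.
apply/setP => [[i j]]; rewrite [in LHS]inE [in RHS]inE /=.
apply/and3P/eqP => [[] | [-> ->]].
  exact: cut_edge_boundary.
by have [sS tS] := mem_component_cut_edge; split=> //; case: st_cut.
Qed.

End CutEdge.

Section Laplacian.
Variables (R : comPzRingType) (n : nat) (adj : rel 'I_n).
Local Notation L := (laplacian R adj).

Lemma laplacianE (v : 'cV[R]_n) i :
  (L *m v) i 0 = \sum_j (adj i j)%:R * (v i 0 - v j 0).
Proof.
have deg : #|[set k | adj i k]|%:R = \sum_j (adj i j)%:R :> R.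
  rewrite -sum1_card natr_sum big_mkcond /=; apply: eq_bigr => j _.
  by rewrite inE; case: (adj i j).
rewrite !mxE; under eq_bigr => j _ do rewrite !mxE mulrBl -mulrA.
rewrite sumrB (bigD1 i) //= big1 => [|j /negbTE ji]; last by rewrite eq_sym ji mul0r.
rewrite eqxx mul1r addr0 deg mulr_suml -sumrB.
by apply: eq_bigr => j _; rewrite mulrBr.
Qed.

Lemma laplacian_const (c : R) : L *m (const_mx c : 'cV_n) = 0.
Proof.
apply/matrixP => i j; rewrite (ord1 j) laplacianE !mxE big1 // => k _.
by rewrite !mxE subrr mulr0.
Qed.

Hypothesis adj_sym : symmetric adj.

Lemma trmx_laplacian : L^T = L.
Proof.
apply/matrixP => i j; rewrite !mxE adj_sym.
by case: (eqVneq i j) => [-> | ij] //; rewrite !mul0r.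
Qed.

Lemma laplacian_energy (v : 'cV[R]_n) :
  \sum_i \sum_j (adj i j)%:R * (v i 0 - v j 0) ^+ 2 =
  2 * \sum_i v i 0 * (L *m v) i 0.
Proof.
have split_sq i j : (adj i j)%:R * (v i 0 - v j 0) ^+ 2 =
    v i 0 * ((adj i j)%:R * (v i 0 - v j 0)) +
    v j 0 * ((adj j i)%:R * (v j 0 - v i 0)).
  by rewrite (adj_sym j i); ring.
under eq_bigr => i _ do rewrite (eq_bigr _ (fun j _ => split_sq i j)) big_split.
rewrite big_split /= [X in _ + X]exchange_big /= mulr2n mulrDl !mul1r.
by congr (_ + _); apply: eq_bigr => i _; rewrite laplacianE mulr_sumr.
Qed.

End Laplacian.

Section LaplacianKernel.
Variables (R : realFieldType) (n : nat) (adj : rel 'I_n).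
Hypotheses (adj_sym : symmetric adj) (adj_conn : connected_graph adj).
Local Notation L := (laplacian R adj).

Lemma laplacian_ker_const (v : 'cV[R]_n) : L *m v = 0 -> forall x y, v x 0 = v y 0.
Proof.
move=> Lv0; have : \sum_i \sum_j (adj i j)%:R * (v i 0 - v j 0) ^+ 2 = 0.
  by rewrite laplacian_energy // Lv0 big1 ?mulr0 // => i _; rewrite mxE mulr0.
have term_ge0 i j : 0 <= (adj i j)%:R * (v i 0 - v j 0) ^+ 2 :> R.
  by rewrite mulr_ge0 ?ler0n ?sqr_ge0.
move/(psumr_eq0P (fun i _ => sumr_ge0 _ (fun j _ => term_ge0 i j))) => rows0.
have edge_eq i j : adj i j -> v i 0 = v j 0.
  move=> ij; have := @psumr_eq0P _ _ _ _ (fun j _ => term_ge0 i j) (rows0 i isT) j isT.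
  by rewrite ij mul1r => /eqP; rewrite sqrf_eq0 subr_eq0 => /eqP.
move=> x y; have cl : closed adj [pred z | v z 0 == v x 0].
  by move=> u w /edge_eq; rewrite !inE => ->.
by have := closed_connect cl (adj_conn x y); rewrite !inE eqxx => /esym/eqP.
Qed.

Lemma laplacian_ker_sum0 (v : 'cV[R]_n) :
  L *m v = 0 -> \sum_i v i 0 = 0 -> v = 0.
Proof.
move=> /laplacian_ker_const vc sum0; apply/matrixP => i j; rewrite (ord1 j) mxE.
move: sum0; under eq_bigr => k _ do rewrite (vc k i).
rewrite sumr_const card_ord -mulr_natr => /eqP.
rewrite mulf_eq0 pnatr_eq0 => /orP [/eqP // | /eqP n0].
by have := leq_trans (ltn_ord i) (eq_leq n0).
Qed.

End LaplacianKernel.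

Section MoorePenrose.
Variables (R : comPzRingType) (n : nat).

Lemma moore_penrose_unique (A X Y : 'M[R]_n) :
  moore_penrose A X -> moore_penrose A Y -> X = Y.
Proof.
move=> [X1 X2 X3 X4] [Y1 Y2 Y3 Y4].
have -> : X = X *m A *m Y.
  transitivity (X *m (A *m X)^T); first by rewrite X3 mulmxA X2.
  transitivity (X *m X^T *m (A *m Y *m A)^T); first by rewrite Y1 trmx_mul mulmxA.
  transitivity (X *m (A *m X)^T *m (A *m Y)^T); first by rewrite !trmx_mul !mulmxA.
  by rewrite X3 Y3 !mulmxA X2.
transitivity ((Y *m A)^T *m Y); last by rewrite Y4 Y2.
transitivity ((A *m X *m A)^T *m Y^T *m Y); last by rewrite X1 trmx_mul.
transitivity ((X *m A)^T *m (Y *m A)^T *m Y); last by rewrite !trmx_mul !mulmxA.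
by rewrite X4 Y4 -!mulmxA (mulmxA Y A Y) Y2.
Qed.

Variables (A X : 'M[R]_n).
Hypotheses (A_sym : A^T = A) (AX : moore_penrose A X).

Lemma moore_penrose_sym : X^T = X.
Proof.
apply: (moore_penrose_unique _ AX); case: AX => [X1 X2 X3 X4]; split.
- by rewrite -A_sym -!trmx_mul mulmxA X1.
- by rewrite -A_sym -!trmx_mul mulmxA X2.
- by rewrite trmx_mul trmxK A_sym -X4 trmx_mul A_sym.
- by rewrite trmx_mul trmxK A_sym -X3 trmx_mul A_sym.
Qed.

(* For symmetric A, X A = (X A)^T = A X, so X = X X A vanishes on ker A. *)
Lemma moore_penrose_ker (v : 'cV[R]_n) : A *m v = 0 -> X *m v = 0.
Proof.
case: AX => _ X2 _ X4 Av0.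
have XA : X *m A = A *m X by rewrite -X4 trmx_mul A_sym moore_penrose_sym.
by rewrite -X2 -(mulmxA X A X) -XA -!mulmxA Av0 !mulmx0.
Qed.

End MoorePenrose.

Lemma laplacian_pinv_solution (R : realFieldType) n (adj : rel 'I_n)
    (X : 'M[R]_n) (x b : 'cV[R]_n) :
  symmetric adj -> connected_graph adj -> moore_penrose (laplacian R adj) X ->
  laplacian R adj *m x = b -> \sum_i x i 0 = 0 -> X *m b = x.
Proof.
move=> adj_sym adj_conn MP Lx sumx0.
have L_sym := trmx_laplacian R adj_sym.
have X1 : X *m const_mx 1 = 0 := moore_penrose_ker L_sym MP (laplacian_const adj 1).
have sumXb0 : \sum_i (X *m b) i 0 = 0.
  under eq_bigr => i _ do rewrite mxE.
  rewrite exchange_big big1 //= => j _; rewrite -mulr_suml.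
  have -> : \sum_i X i j = (X *m (const_mx 1 : 'cV_n)) j 0.
    rewrite mxE; apply: eq_bigr => i _.
    by rewrite -{1}(moore_penrose_sym L_sym MP) !mxE mulr1.
  by rewrite X1 mxE mul0r.
apply/eqP; rewrite -subr_eq0; apply/eqP; apply: laplacian_ker_sum0 => //.
  by case: MP => M1 _ _ _; rewrite mulmxBr -Lx !mulmxA M1 subrr.
transitivity (\sum_i (X *m b) i 0 - \sum_i x i 0); last by rewrite sumXb0 sumx0 subrr.
by rewrite -sumrB; apply: eq_bigr => i _; rewrite !mxE.
Qed.

Section CutPotential.
Variables (R : numFieldType) (n : nat) (S : {set 'I_n}).

Definition cut_potential : 'cV[R]_n := \col_i ((i \in S)%:R - #|S|%:R / n%:R).

Let sum_mem_set : \sum_i (i \in S)%:R = #|S|%:R :> R.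
Proof.
rewrite -sum1_card natr_sum [RHS]big_mkcond /=.
by apply: eq_bigr => i _; case: (i \in S).
Qed.

Let card_set_n0 : n = 0%N -> #|S| = 0%N.
Proof.
by move=> n0; apply/eqP; rewrite -leqn0 -n0 -[n in (_ <= n)%N]card_ord max_card.
Qed.

Lemma sum_cut_potential : \sum_i cut_potential i 0 = 0.
Proof.
under eq_bigr do rewrite mxE.
rewrite sumrB sum_mem_set sumr_const card_ord -[_ *+ n]mulr_natr.
have [/card_set_n0 -> | n_gt0] := posnP n; first by rewrite !mul0r subrr.
by rewrite divfK ?subrr // pnatr_eq0 -lt0n.
Qed.

Lemma sum_sqr_cut_potential :
  \sum_i cut_potential i 0 ^+ 2 = #|S|%:R * #|~: S|%:R / n%:R.
Proof.
under eq_bigr do rewrite mxE.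
set a := #|S|%:R / n%:R.
have sqr_term i : ((i \in S)%:R - a) ^+ 2 = (i \in S)%:R * (1 - 2 * a) + a ^+ 2.
  by case: (i \in S); rewrite ?mulr1n ?mulr0n; ring.
under eq_bigr do rewrite sqr_term.
rewrite big_split /= -mulr_suml sum_mem_set sumr_const card_ord -[_ *+ n]mulr_natr.
have [n0 | n_gt0] := posnP n.
  have n0R : n%:R = 0 :> R by rewrite n0.
  by rewrite /a card_set_n0 // n0R !mulr0 !mul0r addr0.
have -> : #|~: S|%:R = n%:R - #|S|%:R :> R.
  have : (#|S| + #|~: S|)%:R = n%:R :> R by rewrite cardsC card_ord.
  by rewrite natrD => <-; rewrite addrC addKr.
by rewrite /a; field; rewrite pnatr_eq0 -lt0n.
Qed.

Variables (adj : rel 'I_n) (s t : 'I_n).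
Hypotheses (adj_sym : symmetric adj) (adj_st : adj s t).
Hypotheses (sS : s \in S) (tNS : t \notin S).
Hypothesis boundary : forall i j, adj i j -> i \in S -> j \notin S -> (i, j) = (s, t).

Let edge_flow i j : (adj i j)%:R * ((i \in S)%:R - (j \in S)%:R) =
  ((i == s) && (j == t))%:R - ((i == t) && (j == s))%:R :> R.
Proof.
have neq_t v : v \in S -> (v == t) = false by move=> vS; apply: contraNF tNS => /eqP <-.
have neq_s v : v \notin S -> (v == s) = false by apply: contraNF => /eqP ->.
case: (boolP (adj i j)) => [ij | Nij]; last first.
  have Nst : ~~ ((i == s) && (j == t)) by apply: contra Nij => /andP [/eqP -> /eqP ->].
  have Nts : ~~ ((i == t) && (j == s)).
    by apply: contra Nij => /andP [/eqP -> /eqP ->]; rewrite adj_sym.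
  by rewrite mul0r (negbTE Nst) (negbTE Nts) subrr.
rewrite mul1r; case: (boolP (i \in S)) => iS; case: (boolP (j \in S)) => jS.
- by rewrite (neq_t i) ?(neq_t j) ?andbF ?subrr.
- by case: (boundary ij iS jS) => -> ->; rewrite !eqxx (neq_t s sS).
- rewrite adj_sym in ij; case: (boundary ij jS iS) => -> ->.
  by rewrite !eqxx eq_sym (neq_t s sS).
- by rewrite (neq_s i) ?(neq_s j) ?andbF ?subrr.
Qed.

Lemma laplacian_cut_potential :
  laplacian R adj *m cut_potential = indic R s - indic R t.
Proof.
have sum_pair u w i : \sum_k ((i == u) && (k == w))%:R = (i == u)%:R :> R.
  case: (i == u); last by rewrite big1.
  by rewrite (bigD1 w) //= eqxx big1 ?addr0 // => k /negbTE ->.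
apply/matrixP => i j; rewrite (ord1 j) laplacianE !mxE.
under eq_bigr => k _ do rewrite !mxE opprB addrA subrK edge_flow.
by rewrite sumrB !sum_pair.
Qed.

End CutPotential.

Lemma biharmonic_sqr (R : rcfType) n (Lp : 'M[R]_n) s t : Lp^T = Lp ->
  biharmonic Lp s t ^+ 2 = \sum_i (Lp *m (indic R s - indic R t)) i 0 ^+ 2.
Proof.
move=> Lp_sym; rewrite /biharmonic; set b := indic R s - indic R t.
have -> : b^T *m (Lp *m Lp) *m b = (Lp *m b)^T *m (Lp *m b).
  by rewrite trmx_mul Lp_sym !mulmxA.
have -> : ((Lp *m b)^T *m (Lp *m b)) 0 0 = \sum_i (Lp *m b) i 0 ^+ 2.
  by rewrite mxE; apply: eq_bigr => i _; rewrite mxE expr2.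
by rewrite sqr_sqrtr // sumr_ge0 // => i _; apply: sqr_ge0.
Qed.

Theorem theorem5p1 (R : rcfType) (n : nat) (adj : rel 'I_n) (s t : 'I_n)
    (Lp : 'M[R]_n) :
  simple_graph adj ->
  connected_graph adj ->
  cut_edge adj s t ->
  moore_penrose (laplacian R adj) Lp ->
  let S := component (del_edge adj s t) s in
  let T := component (del_edge adj s t) t in
  biharmonic Lp s t ^+ 2 = (#|S|)%:R * (#|T|)%:R / n%:R /\
  (#|S|)%:R * (#|T|)%:R / n%:R = (iso_ratio R adj S)^-1.
Proof.
move=> [adj_sym _] adj_conn st_cut MP S T.
have [sS tNS] := mem_component_cut_edge adj_sym adj_conn st_cut.
have -> : T = ~: S by apply: component_cut_edgeC.
split; last by rewrite /iso_ratio cut_size_cut_edge // mulr1 invf_div.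
have Lx : laplacian R adj *m cut_potential R S = indic R s - indic R t.
  have boundary := @cut_edge_boundary _ adj s t.
  by have := laplacian_cut_potential R adj_sym st_cut.1 sS tNS boundary.
have Lp_sym := moore_penrose_sym (trmx_laplacian R adj_sym) MP.
rewrite biharmonic_sqr // (laplacian_pinv_solution adj_sym adj_conn MP Lx).
  exact: sum_sqr_cut_potential.
exact: sum_cut_potential.
Qed.
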